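(* A homomorphism $h:\mathbf A\to\mathbf B$ of $\sigma$-structures is a non-retraction if and only if there is a component $\mathbf C$ of $\mathbf B$ such that for no substructure $\mathbf D\subseteq\mathbf A$ is the restriction of $h$ to $\mathbf D$ an isomorphism $\mathbf D\to\mathbf C$.
   Context: A type $\sigma$ is a finite set of relation symbols with arities; a $\sigma$-structure $\mathbf A$ is a finite set $V(\mathbf A)$ with an $r$-ary relation $R(\mathbf A)$ for each $R$ of arity $r$; homomorphisms are relation-preserving maps. $\mathbf A$ is a substructure of $\mathbf B$ if $V(\mathbf A)\subseteq V(\mathbf B)$ and $R(\mathbf A)\subseteq R(\mathbf B)$ for all $R$. The incidence multigraph of $\mathbf B$ is bipartite with parts $V(\mathbf B)$ and the blocks $(R,(x_1,\dots,x_r))$, $(x_1,\dots,x_r)\in R(\mathbf B)$, with an edge from $x_i$ to the block for each $i$; the components of $\mathbf B$ are the substructures determined by the connected components of this multigraph. A homomorphism $h:\mathbf A\to\mathbf B$ is a retraction if there is a homomorphism $g:\mathbf B\to\mathbf A$ with $h\circ g$ the identity of $\mathbf B$; otherwise it is a non-retraction. *)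

From mathcomp Require Import all_boot.
Set Implicit Arguments. Unset Strict Implicit. Unset Printing Implicit Defensive.

Record struc (sigma : finType) (ar : sigma -> nat) := Struc {
  sV : finType;
  sR : forall s : sigma, {set (ar s).-tuple sV}
}.
Arguments sV {sigma ar}.
Arguments sR {sigma ar}.

Section Defs.
Variables (sigma : finType) (ar : sigma -> nat).

Definition is_hom (A B : struc ar) (h : sV A -> sV B) : Prop :=
  forall s (t : (ar s).-tuple (sV A)), t \in sR A s -> map_tuple h t \in sR B s.

Definition retraction (A B : struc ar) (h : sV A -> sV B) : Prop :=
  exists g : sV B -> sV A, is_hom g /\ forall y, h (g y) = y.

Definition is_substr (A : struc ar) (VD : {set sV A})
    (RD : forall s, {set (ar s).-tuple (sV A)}) : Prop :=
  forall s, RD s \subset sR A s /\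
    (forall t : (ar s).-tuple (sV A), t \in RD s -> forall x, x \in t -> x \in VD).

(* blocks of B (possibly not in a relation) *)
Definition block (B : struc ar) := {s : sigma & (ar s).-tuple (sV B)}.

(* nodes of the incidence multigraph: vertices and blocks *)
Definition node (B : struc ar) := (sV B + block B)%type.

Definition is_block (B : struc ar) (b : block B) : bool := tagged b \in sR B (tag b).

Definition valid_node (B : struc ar) (n : node B) : bool :=
  match n with inl _ => true | inr b => is_block b end.

(* incidence relation (multiplicities are irrelevant for connectivity) *)
Definition inc (B : struc ar) : rel (node B) := fun u v =>
  match u, v with
  | inl x, inr b => is_block b && (x \in tagged b)
  | inr b, inl x => is_block b && (x \in tagged b)
  | _, _ => false
  end.

Definition compV (B : struc ar) (n : node B) : {set sV B} :=
  [set x | connect (@inc B) n (inl x)].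
Definition compR (B : struc ar) (n : node B) (s : sigma) : {set (ar s).-tuple (sV B)} :=
  [set t | (t \in sR B s) && connect (@inc B) n (inr (Tagged (fun s => (ar s).-tuple (sV B)) t))].

Definition restr_iso (A B : struc ar) (h : sV A -> sV B)
    (VD : {set sV A}) (RD : forall s, {set (ar s).-tuple (sV A)})
    (VC : {set sV B}) (RC : forall s, {set (ar s).-tuple (sV B)}) : Prop :=
  {in VD &, injective h} /\ h @: VD = VC /\
  forall s (t : (ar s).-tuple (sV A)), (forall x, x \in t -> x \in VD) ->
    (t \in RD s) = (map_tuple h t \in RC s).

End Defs.

From mathcomp Require Import all_boot.
From Stdlib Require Import Classical ClassicalEpsilon ChoiceFacts.

Set Implicit Arguments. Unset Strict Implicit. Unset Printing Implicit Defensive.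

(* If g is a homomorphic section of h, then g maps each component C of B onto a
   substructure of A on which h restricts to an isomorphism onto C.
   Conversely, given for every component C such a substructure D_C, the inverse
   maps of the isomorphisms D_C -> C glue to a map g : B -> A with h \o g = id;
   g is a homomorphism because every tuple of a relation of B lies in a single
   component C, and h|D_C reflects relations. *)

Section Incidence.
Variables (sigma : finType) (ar : sigma -> nat) (B : struc ar).

Lemma inc_sym : symmetric (@inc _ _ B).
Proof. by move=> [x|b] [y|c]. Qed.

Lemma connect_sym_inc : connect_sym (@inc _ _ B).
Proof. exact: sym_connect_sym inc_sym. Qed.

Definition block_node s (t : (ar s).-tuple (sV B)) : node B :=
  inr (Tagged (fun s => (ar s).-tuple (sV B)) t).

Lemma inc_block_node s (t : (ar s).-tuple (sV B)) x :
  t \in sR B s -> x \in t -> inc (inl x) (block_node t).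
Proof. by rewrite /= /is_block /= => -> ->. Qed.

Lemma mem_compR_compV (n : node B) s (t : (ar s).-tuple (sV B)) x :
  t \in compR n s -> x \in t -> x \in compV n.
Proof.
rewrite !inE => /andP[tR n_t] xt.
by apply: connect_trans n_t _; rewrite connect_sym_inc connect1 ?inc_block_node.
Qed.

Lemma connect_valid_node (n m : node B) :
  connect (@inc _ _ B) n m -> valid_node n -> valid_node m.
Proof.
case: m => [//|b]; rewrite connect_sym_inc => /connectP[[|v p] /=].
  by move=> _ ->.
by case: v => [x|c] /andP[] //= /andP[].
Qed.

Lemma valid_root (n : node B) :
  valid_node n -> valid_node (root (@inc _ _ B) n).
Proof. exact/connect_valid_node/connect_root. Qed.

Lemma mem_compR_root s (t : (ar s).-tuple (sV B)) :
  t \in sR B s -> t \in compR (root (@inc _ _ B) (block_node t)) s.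
Proof. by move=> tR; rewrite inE tR connect_sym_inc connect_root. Qed.

Lemma root_vertex_block s (t : (ar s).-tuple (sV B)) y :
  t \in sR B s -> y \in t ->
  root (@inc _ _ B) (inl y) = root (@inc _ _ B) (block_node t).
Proof. by move=> tR yt; apply/(rootP connect_sym_inc)/connect1/inc_block_node. Qed.

End Incidence.

Lemma map_tupleK n (T U : Type) (g : U -> T) (h : T -> U) :
  cancel g h -> cancel (@map_tuple n U T g) (map_tuple h).
Proof. by move=> gK t; apply: eq_from_tnth => i; rewrite !tnth_map gK. Qed.

Section IsoPreimage.
Variables (sigma : finType) (ar : sigma -> nat) (A B : struc ar).
Variable h : sV A -> sV B.

Lemma restr_iso_surj VD RD VC RC y :
  restr_iso h VD RD VC RC -> y \in VC -> exists2 x, x \in VD & h x = y.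
Proof. by move=> [_ [<- _]] /imsetP[x xD ->]; exists x. Qed.

Lemma restr_iso_reflect VD RD VC RC s (t : (ar s).-tuple (sV A)) :
  is_substr VD RD -> restr_iso h VD RD VC RC ->
  (forall x, x \in t -> x \in VD) -> map_tuple h t \in RC s -> t \in sR A s.
Proof.
move=> /(_ s)[/subsetP RD_A _] [_ [_ iso]] tD htC.
by apply: RD_A; rewrite iso.
Qed.

Definition has_iso_preimage (n : node B) : Prop :=
  exists (VD : {set sV A}) (RD : forall s, {set (ar s).-tuple (sV A)}),
    is_substr VD RD /\ restr_iso h VD RD (compV n) (compR n).

Lemma retraction_iso_preimage (n : node B) :
  retraction h -> has_iso_preimage n.
Proof.
move=> [g [g_hom gK]].
exists (g @: compV n), (fun s => [set map_tuple g t | t in compR n s]); split.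
  move=> s; split.
    apply/subsetP => _ /imsetP[t tC ->]; apply: g_hom.
    by move: tC; rewrite inE => /andP[].
  move=> _ /imsetP[t tC ->] _ /mapP[y yt ->].
  exact/imset_f/(mem_compR_compV tC yt).
split; first by move=> _ _ /imsetP[y1 _ ->] /imsetP[y2 _ ->]; rewrite !gK => ->.
split.
  by rewrite -imset_comp (eq_imset _ (g := id)) ?imset_id // => y /=; rewrite gK.
move=> s t tD; apply/imsetP/idP => [[u uC ->]|htC]; first by rewrite map_tupleK.
exists (map_tuple h t) => //; apply: eq_from_tnth => i; rewrite !tnth_map.
by have /tD /imsetP[y _ ->] := mem_tnth i t; rewrite gK.
Qed.

Lemma iso_preimages_retraction :
  (forall n, valid_node n -> has_iso_preimage n) -> retraction h.
Proof.
have fun_choice := constructive_indefinite_descr_fun_choice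
                     constructive_indefinite_description.
move=> preimage.
pose iso_preimage_on n (p : {set sV A} * (forall s, {set (ar s).-tuple (sV A)})) :=
  valid_node n -> is_substr p.1 p.2 /\ restr_iso h p.1 p.2 (compV n) (compR n).
have [D DP] : exists D, forall n, iso_preimage_on n (D n).
  apply: (fun_choice _ _ iso_preimage_on) => n.
  case vn: (valid_node n).
    by have [VD [RD iso]] := preimage n vn; exists (VD, RD).
  by exists (set0, fun s => set0); rewrite /iso_preimage_on vn.
(* [root] selects one node per component, so all vertices of a component take
   their preimages from the same substructure. *)
pose comp y := root (@inc _ _ B) (inl y).
have [g gP] : exists g : sV B -> sV A, forall y, g y \in (D (comp y)).1 /\ h (g y) = y.
  apply: (fun_choice _ _ (fun y x => x \in (D (comp y)).1 /\ h x = y)) => y.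
  have [_ iso] := DP (comp y) (valid_root (isT : valid_node (inl y))).
  have y_comp : y \in compV (comp y) by rewrite inE connect_sym_inc connect_root.
  by have [x xD hx] := restr_iso_surj iso y_comp; exists x.
exists g; split=> [s t tR|y]; last by case: (gP y).
have gK : cancel g h by move=> y; case: (gP y).
pose n := root (@inc _ _ B) (block_node t).
have [sub iso] := DP n (valid_root (tR : valid_node (block_node t))).
apply: restr_iso_reflect sub iso _ _; last by rewrite map_tupleK ?mem_compR_root.
move=> _ /mapP[y yt ->]; case: (gP y) => + _.
by rewrite /comp (root_vertex_block tR yt).
Qed.

End IsoPreimage.

Theorem proposition6p1 (sigma : finType) (ar : sigma -> nat) (A B : struc ar)
    (h : sV A -> sV B) (hhom : is_hom h) :
  ~ retraction h <->
  exists n : node B, valid_node n /\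
    forall (VD : {set sV A}) (RD : forall s, {set (ar s).-tuple (sV A)}),
      is_substr VD RD -> ~ restr_iso h VD RD (compV n) (compR n).
Proof.
split=> [not_retr|[n [_ no_preimage]] /(retraction_iso_preimage n)[VD [RD []]]].
  apply: NNPP => all_preimages; apply/not_retr/iso_preimages_retraction => n vn.
  apply: NNPP => no_preimage; apply: all_preimages; exists n; split=> // VD RD sub iso.
  by apply: no_preimage; exists VD, RD.
exact: no_preimage.
Qed.
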